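(* Let $\mathcal L$ be a class of modules and let $M$ be a pure-epimorphic image of a strict $\mathcal L$-atomic module belonging to $\mathcal L$. Then the following are equivalent: (i) $M$ is strict $\mathcal L$-atomic; (ii) every single element $m\in M$ is an $\mathcal L$-free realization of some (unary) pp formula.
   Context: $R$ is a ring with $1$; modules are left $R$-modules. pp formulas as usual; a pure epimorphism is a surjective homomorphism such that every tuple of the target satisfying a pp formula has a preimage satisfying the same formula. $(M,\bar m)$ is an $\mathcal L$-free realization of a pp formula $\phi$ if $\bar m\in\phi(M)$ and for every $L\in\mathcal L$ and $\bar c\in\phi(L)$ there is a homomorphism $M\to L$ sending $\bar m$ to $\bar c$; $M$ is strict $\mathcal L$-atomic if every finite tuple of $M$ is an $\mathcal L$-free realization of some pp formula. *)

From HB Require Import structures.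
From mathcomp Require Import all_boot all_order all_algebra.
Set Implicit Arguments. Unset Strict Implicit. Unset Printing Implicit Defensive.
Import GRing.Theory.
Local Open Scope ring_scope.

(* A positive-primitive (pp) formula in n free variables over R:
     phi(x_1..x_n) = exists y_1..y_m,  A x + B y = 0  (a system of k linear
   equations), with A : k x n and B : k x m matrices over R, scalars acting on
   the left (left R-modules). *)
Record ppf (R : pzRingType) (n : nat) := PPF {
  pp_eqs : nat;
  pp_bound : nat;
  pp_A : 'M[R]_(pp_eqs, n);
  pp_B : 'M[R]_(pp_eqs, pp_bound)
}.

Definition pp_sat (R : pzRingType) (n : nat) (phi : ppf R n) (M : lmodType R)
  (x : 'I_n -> M) : Prop :=
  exists y : 'I_(pp_bound phi) -> M,
    forall i : 'I_(pp_eqs phi),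
      \sum_(j < n) pp_A phi i j *: x j
      + \sum_(l < pp_bound phi) pp_B phi i l *: y l = 0.

Definition pure_epi (R : pzRingType) (N M : lmodType R) (g : {linear N -> M}) : Prop :=
  (forall m : M, exists a : N, g a = m) /\
  (forall (n : nat) (phi : ppf R n) (c : 'I_n -> M), pp_sat phi c ->
     exists a : 'I_n -> N, (forall i, g (a i) = c i) /\ pp_sat phi a).

Definition free_realization (R : pzRingType) (L : lmodType R -> Prop)
  (n : nat) (phi : ppf R n) (M : lmodType R) (m : 'I_n -> M) : Prop :=
  pp_sat phi m /\
  forall (K : lmodType R), L K -> forall c : 'I_n -> K, pp_sat phi c ->
    exists f : {linear M -> K}, forall i, f (m i) = c i.

Definition strict_atomic (R : pzRingType) (L : lmodType R -> Prop) (M : lmodType R) : Prop :=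
  forall (n : nat) (m : 'I_n -> M),
    exists phi : ppf R n, free_realization L phi m.

From mathcomp Require Import all_boot all_order all_algebra.
Set Implicit Arguments. Unset Strict Implicit. Unset Printing Implicit Defensive.
Import GRing.Theory.
Local Open Scope ring_scope.

(* The direction (i) => (ii) is the case n = 1.  For
   (ii) => (i) the idea is to split g linearly over any finitely many
   elements of M:
   - a free realization (M, m) of a pp formula lifts along a pure epimorphism
     g with domain in L: purity gives a preimage tuple satisfying the formula,
     and freeness gives a linear map f : M -> N sending m to it, so g (f m) = m;
   - if every element of M lifts in this way, every finite list s of M admits
     a linear h : M -> N with g (h x) = x on s; adding x to the list corrects h
     to h + f (id - g h), where f lifts x - g (h x);
   - given a tuple m of M, take such an h on its entries; h m is a free
     realization of some phi in N, and as linear maps preserve pp formulas,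
     phi holds at g (h m) = m, while maps out of N pull back along h. *)

Lemma pp_sat_image (R : pzRingType) (U V : lmodType R) (f : {linear U -> V})
    (n : nat) (phi : ppf R n) (x : 'I_n -> U) (z : 'I_n -> V) :
  (forall i, f (x i) = z i) -> pp_sat phi x -> pp_sat phi z.
Proof.
move=> fxz [y Hy]; exists (fun l => f (y l)) => i.
have := congr1 f (Hy i); rewrite linear0 linearD !linear_sum => E.
rewrite -[RHS]E; congr (_ + _); by apply: eq_bigr => j _; rewrite linearZ ?fxz.
Qed.

Section Splitting.
Variables (R : pzRingType) (N M : lmodType R) (g : {linear N -> M}).

Lemma free_realization_lifts (L : lmodType R -> Prop) (n : nat) (phi : ppf R n)
    (m : 'I_n -> M) :
  pure_epi g -> L N -> free_realization L phi m ->
  exists f : {linear M -> N}, forall i, g (f (m i)) = m i.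
Proof.
move=> [_ pp_lift] LN [sat_m free_m].
have [a [ga sat_a]] := pp_lift n phi m sat_m.
have [f fma] := free_m N LN a sat_a.
by exists f => i; rewrite fma ga.
Qed.

Lemma local_section :
  (forall y : M, exists f : {linear M -> N}, g (f y) = y) ->
  forall s : seq M, exists h : {linear M -> N}, {in s, forall x, g (h x) = x}.
Proof.
move=> lift; elim=> [|x s [h hs]].
  by exists (\0 : {linear M -> N}).
have [f fy] := lift (x - g (h x)).
(* h' agrees with h wherever g h is the identity, and fixes x by the choice of f *)
pose h' : {linear M -> N} := h \+ (f \o (idfun \- (g \o h)%FUN))%FUN.
exists h' => z; rewrite inE => /predU1P [-> | zs] /=.
  by rewrite linearD fy addrC subrK.
by rewrite hs // subrr linear0 addr0 hs.
Qed.

Lemma free_realization_section (L : lmodType R -> Prop) (n : nat)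
    (phi : ppf R n) (h : {linear M -> N}) (m : 'I_n -> M) :
  free_realization L phi (fun i => h (m i)) ->
  (forall i, g (h (m i)) = m i) -> free_realization L phi m.
Proof.
move=> [sat_hm free_hm] ghm; split; first exact: pp_sat_image sat_hm.
move=> K LK c sat_c; have [f fhm] := free_hm K LK c sat_c.
by exists (f \o h)%FUN.
Qed.

End Splitting.

Theorem proposition3p6 (R : pzRingType) (L : lmodType R -> Prop) (N M : lmodType R)
  (HNL : L N) (HNat : strict_atomic L N)
  (Hepi : exists g : {linear N -> M}, pure_epi g) :
  strict_atomic L M <->
  (forall m : M, exists phi : ppf R 1, free_realization L phi (fun _ : 'I_1 => m)).
Proof.
split=> [atomic_M m | single_M n m]; first exact: atomic_M.
have [g pure_g] := Hepi.
have lift (y : M) : exists f : {linear M -> N}, g (f y) = y.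
  have [phi fr_y] := single_M y.
  have [f fy] := free_realization_lifts pure_g HNL fr_y.
  by exists f; apply: fy ord0.
have [h hs] := local_section lift [seq m i | i <- enum 'I_n].
have ghm (i : 'I_n) : g (h (m i)) = m i by rewrite hs // map_f // mem_enum.
have [phi fr_hm] := HNat n (fun i => h (m i)).
by exists phi; apply: free_realization_section fr_hm ghm.
Qed.
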